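(* Let $G_1, G_2, \ldots$ be a sequence of ordered graphs, and suppose that either every $G_i$ is irreducible, or every complement $\overline{G_i}$ is irreducible. Let $\mathcal{P}$ be the set of all ordered graphs $G$ such that $G_i$ is not an induced ordered subgraph of $G$ for every $i \in \mathbb{N}$, and let $\mathcal{P}_n$ be the set of members of $\mathcal{P}$ with vertex set $[n]$. Then either $\lim_{n \to \infty} |\mathcal{P}_n|^{1/n}$ exists, or $\liminf_{n \to \infty} |\mathcal{P}_n|^{1/n} = \infty$.
   Context: An ordered graph of order $n$ is a graph on vertex set $[n]$ with the natural order. $G$ is an induced ordered subgraph of $H$ if there is an injective order-preserving map $V(G)\to V(H)$ preserving adjacency and non-adjacency. A pair of vertices $u<v$ of an ordered graph $G$ separates the edges of $G$ if for every edge $ij\in E(G)$ with $i<j$, either $j\leqslant u$ or $v\leqslant i$. $G$ is irreducible if no pair of vertices separates the edges of $G$. *)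

From HB Require Import structures.
From mathcomp Require Import all_boot all_order all_algebra.
From mathcomp Require Import all_classical all_reals all_analysis.
Set Implicit Arguments. Unset Strict Implicit. Unset Printing Implicit Defensive.
Import Order.TTheory GRing.Theory Num.Theory.

(* An ordered graph of order n: adjacency on vertex set [n] = 'I_n
   (vertex k+1 of the paper is represented by k), with the natural order. *)
Definition ograph (n : nat) := {ffun 'I_n * 'I_n -> bool}.

Definition adj n (g : ograph n) (i j : 'I_n) : bool := g (i, j).

Definition is_graph n (g : ograph n) : bool :=
  [forall i : 'I_n, forall j : 'I_n, (adj g i j == adj g j i) && ~~ adj g i i].

Definition ocompl n (g : ograph n) : ograph n :=
  [ffun p : 'I_n * 'I_n => (p.1 != p.2) && ~~ g p].

Definition induced_sub m n (g : ograph m) (h : ograph n) : Prop :=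
  exists f : 'I_m -> 'I_n,
    injective f /\ (forall i j : 'I_m, (i <= j)%N -> (f i <= f j)%N) /\
    (forall i j : 'I_m, i != j -> adj h (f i) (f j) = adj g i j).

Definition separates n (g : ograph n) (u v : 'I_n) : Prop :=
  forall i j : 'I_n, (i < j)%N -> adj g i j -> (j <= u)%N \/ (v <= i)%N.

Definition irreducible n (g : ograph n) : Prop :=
  ~ exists u v : 'I_n, (u < v)%N /\ separates g u v.

Definition Pn (ord : nat -> nat) (G : forall i, ograph (ord i)) (n : nat)
  : {set ograph n} :=
  [set g : ograph n | is_graph g &
     `[< forall i : nat, ~ induced_sub (G i) g >]].

(* If every G_i is irreducible, putting a graph of P_m in front of a graph of
   P_n, with no edges between the two parts, gives a graph of P_(m+n): an
   induced copy of G_i cannot straddle the cut, because the last vertex of the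
   copy before the cut and the first one after it would separate its edges.
   When the complements are irreducible, join the two parts completely
   instead.  Hence |P_n| is supermultiplicative, and Fekete's lemma applied to
   log |P_n| shows that |P_n|^(1/n) converges to the exponential of
   sup_n (log |P_n|)/n, or tends to infinity when that supremum is infinite.
   If some P_k is empty, then so is every P_n with n >= k, since P is closed
   under induced subgraphs. *)

From HB Require Import structures.
From mathcomp Require Import all_boot all_order all_algebra.
From mathcomp Require Import all_classical all_reals all_analysis.
From mathcomp Require Import lra zify.
Import Order.TTheory GRing.Theory Num.Theory.
Import numFieldNormedType.Exports.
Local Open Scope classical_set_scope.
Local Open Scope ring_scope.
Set Implicit Arguments. Unset Strict Implicit. Unset Printing Implicit Defensive.

Definition oconcat m n (b : bool) (g : ograph m) (h : ograph n) : ograph (m + n) :=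
  [ffun p : 'I_(m + n) * 'I_(m + n) =>
     match fintype.split p.1, fintype.split p.2 with
     | inl i, inl j => g (i, j)
     | inr i, inr j => h (i, j)
     | _, _ => b
     end].

Section Concatenation.
Variables (m n : nat) (b : bool) (g : ograph m) (h : ograph n).

Lemma adj_oconcat_lshift (i j : 'I_m) :
  adj (oconcat b g h) (lshift n i) (lshift n j) = adj g i j.
Proof. by rewrite /adj ffunE /= !(unsplitK (inl _ _)). Qed.

Lemma adj_oconcat_rshift (i j : 'I_n) :
  adj (oconcat b g h) (rshift m i) (rshift m j) = adj h i j.
Proof. by rewrite /adj ffunE /= !(unsplitK (inr _ _)). Qed.

Lemma adj_oconcat_cross (x y : 'I_(m + n)) :
  (x < m)%N -> (m <= y)%N -> adj (oconcat b g h) x y = b.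
Proof.
move=> xm my; rewrite /adj ffunE /=.
case: splitP => [i _|i Ex]; last by move: xm; rewrite Ex ltnNge leq_addr.
by case: splitP => [j Ey|j _] //; move: my; rewrite Ey leqNgt ltn_ord.
Qed.

Lemma is_graph_oconcat : is_graph g -> is_graph h -> is_graph (oconcat b g h).
Proof.
move=> gG hG; apply/forallP => x; apply/forallP => y.
have sym p (k : ograph p) (i j : 'I_p) : is_graph k -> k (i, j) = k (j, i).
  by move=> /forallP/(_ i)/forallP/(_ j)/andP[/eqP].
have irr p (k : ograph p) (i : 'I_p) : is_graph k -> ~~ k (i, i).
  by move=> /forallP/(_ i)/forallP/(_ i)/andP[].
rewrite /adj !ffunE /=; apply/andP; split.
  by case: (fintype.split x) => i; case: (fintype.split y) => j //; rewrite sym.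
by case: (fintype.split x) => i; apply: irr.
Qed.

End Concatenation.

Lemma oconcat_inj m n b :
  injective (fun p : ograph m * ograph n => oconcat b p.1 p.2).
Proof.
move=> [g h] [g' h'] /= E; congr pair; apply/ffunP => -[i j].
  by have := congr1 (fun c => adj c (lshift n i) (lshift n j)) E;
    rewrite !adj_oconcat_lshift.
by have := congr1 (fun c => adj c (rshift m i) (rshift m j)) E;
  rewrite !adj_oconcat_rshift.
Qed.

Definition oembedding p q (H : ograph p) (K : ograph q) (f : 'I_p -> 'I_q) :=
  injective f /\ (forall i j : 'I_p, (i <= j)%N -> (f i <= f j)%N) /\
  (forall i j : 'I_p, i != j -> adj K (f i) (f j) = adj H i j).

Lemma irreducible_monotone_cut p (H : ograph p) (f : 'I_p -> nat) (m : nat) :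
  irreducible H -> (forall i j : 'I_p, (i <= j)%N -> (f i <= f j)%N) ->
  (forall x y : 'I_p, (x < y)%N -> (f x < m)%N -> (m <= f y)%N -> ~~ adj H x y) ->
  (forall x, (f x < m)%N) \/ (forall x, (m <= f x)%N).
Proof.
move=> irrH fmono cross.
have [/existsP [x0 lo_x0]|/existsPn all_hi] := boolP [exists x, (f x < m)%N];
  last by right => x; rewrite leqNgt all_hi.
have [/existsP [y0 hi_y0]|/existsPn all_lo] := boolP [exists x, (m <= f x)%N];
  last by left => x; rewrite ltnNge all_lo.
exfalso; apply: irrH.
have [u lo_u max_u] := @arg_maxnP _ x0 (fun x => f x < m)%N val lo_x0.
have [v hi_v min_v] := @arg_minnP _ y0 (fun x => m <= f x)%N val hi_y0.
exists u, v; split.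
  rewrite ltnNge; apply/negP => /fmono /(leq_trans hi_v).
  by rewrite leqNgt lo_u.
move=> i j ij adj_ij.
have [fj|fj] := ltnP (f j) m; first by left; exact: max_u.
have [fi|fi] := ltnP (f i) m; first by move: (cross _ _ ij fi fj); rewrite adj_ij.
by right; exact: min_v.
Qed.

Section EmbeddingIntoConcatenation.
Variables (p m n : nat) (b : bool) (H : ograph p) (g : ograph m) (h : ograph n).
Variable f : 'I_p -> 'I_(m + n).
Hypothesis embf : oembedding H (oconcat b g h) f.

Lemma oembedding_oconcat_l : (forall x, (f x < m)%N) -> induced_sub H g.
Proof.
case: embf => finj [fmono fadj] lo.
pose f' x := Ordinal (lo x).
have fE x : f x = lshift n (f' x) by apply/val_inj.
exists f'; split; [|split].
- by move=> x y /(congr1 (lshift n)); rewrite -!fE => /finj.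
- by move=> x y /fmono; rewrite !fE.
- by move=> x y xy; rewrite -(fadj x y xy) !fE adj_oconcat_lshift.
Qed.

Lemma oembedding_oconcat_r : (forall x, (m <= f x)%N) -> induced_sub H h.
Proof.
case: embf => finj [fmono fadj] hi.
have lt x : (f x - m < n)%N by rewrite ltn_subLR ?hi // ltn_ord.
pose f' x := Ordinal (lt x).
have fE x : f x = rshift m (f' x) by apply/val_inj => /=; rewrite subnKC ?hi.
exists f'; split; [|split].
- by move=> x y /(congr1 (@rshift m n)); rewrite -!fE => /finj.
- by move=> x y /fmono; rewrite !fE /= leq_add2l.
- by move=> x y xy; rewrite -(fadj x y xy) !fE adj_oconcat_rshift.
Qed.

End EmbeddingIntoConcatenation.

Lemma adj_ocompl n (g : ograph n) (i j : 'I_n) :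
  adj (ocompl g) i j = (i != j) && ~~ adj g i j.
Proof. by rewrite /adj ffunE. Qed.

Lemma induced_sub_oconcat p m n b (H : ograph p) (g : ograph m) (h : ograph n) :
  irreducible (if b then ocompl H else H) ->
  induced_sub H (oconcat b g h) -> induced_sub H g \/ induced_sub H h.
Proof.
move=> irrH [f embf]; have [_ [fmono fadj]] := embf.
have cross (x y : 'I_p) : (x < y)%N -> (f x < m)%N -> (m <= f y)%N ->
    ~~ adj (if b then ocompl H else H) x y.
  move=> xy fx fy; have xny : x != y by rewrite neq_ltn xy.
  have := fadj x y xny; rewrite adj_oconcat_cross // => bE.
  by case: b {irrH embf fadj} bE => bE; rewrite ?adj_ocompl -bE ?xny.
have [lo|hi] := irreducible_monotone_cut irrH fmono cross.
  by left; exact: oembedding_oconcat_l embf lo.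
by right; exact: oembedding_oconcat_r embf hi.
Qed.

Definition orestrict k n (le_kn : (k <= n)%N) (g : ograph n) : ograph k :=
  [ffun p : 'I_k * 'I_k => g (widen_ord le_kn p.1, widen_ord le_kn p.2)].

Section Forbidden.
Variables (ord : nat -> nat) (G : forall i : nat, ograph (ord i)).

Lemma oconcat_Pn b m n (g : ograph m) (h : ograph n) :
  (forall i, irreducible (if b then ocompl (G i) else G i)) ->
  g \in Pn G m -> h \in Pn G n -> oconcat b g h \in Pn G (m + n).
Proof.
move=> irrG; rewrite !inE => /andP[gG /asboolP g_free] /andP[hG /asboolP h_free].
rewrite is_graph_oconcat //=; apply/asboolP => i /(induced_sub_oconcat (irrG i)).
by case; [exact: g_free | exact: h_free].
Qed.

Lemma card_Pn_supermul b :
  (forall i, irreducible (if b then ocompl (G i) else G i)) ->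
  forall m n, (#|Pn G m| * #|Pn G n| <= #|Pn G (m + n)|)%N.
Proof.
move=> irrG m n; rewrite -cardsX -(card_imset _ (@oconcat_inj m n b)).
apply: subset_leq_card; apply/fintype.subsetP => _ /imsetP [[g h] /setXP[gP hP] ->].
exact: oconcat_Pn.
Qed.

Lemma orestrict_Pn k n (le_kn : (k <= n)%N) (g : ograph n) :
  g \in Pn G n -> orestrict le_kn g \in Pn G k.
Proof.
rewrite !inE => /andP[gG /asboolP g_free]; apply/andP; split.
  apply/forallP => x; apply/forallP => y; rewrite /adj !ffunE.
  by have := forallP (forallP gG (widen_ord le_kn x)) (widen_ord le_kn y).
apply/asboolP => i [f [finj [fmono fadj]]]; apply: (g_free i).
exists (widen_ord le_kn \o f); split; [|split].
- by apply: inj_comp finj => x y /(congr1 val) /= /val_inj.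
- by move=> x y /fmono.
- by move=> x y xy; rewrite -(fadj x y xy) /adj ffunE.
Qed.

Lemma card_Pn_gt0_le k n : (k <= n)%N -> (0 < #|Pn G n|)%N -> (0 < #|Pn G k|)%N.
Proof.
move=> le_kn; rewrite !card_gt0 => /set0Pn [g gP]; apply/set0Pn.
by exists (orestrict le_kn g); exact: orestrict_Pn.
Qed.

End Forbidden.

Section SupermultiplicativeGrowth.
Variables (R : realType) (c : nat -> nat).
Hypothesis c_supermul : forall m n, (c m * c n <= c (m + n))%N.

Lemma supermul_expn k q r : (c k ^ q * c r <= c (q * k + r))%N.
Proof.
elim: q => [|q IH]; first by rewrite expn0 mul1n.
rewrite expnS -mulnA mulSn -addnA; apply: leq_trans (c_supermul _ _).
exact: leq_mul.
Qed.

Hypothesis c_gt0 : forall n, (0 < c n)%N.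

Definition log_rate n : R := ln (c n)%:R / n%:R.

Lemma log_rate0 : log_rate 0 = 0.
Proof. by rewrite /log_rate invr0 mulr0. Qed.

Lemma ln_c_ge0 n : 0 <= ln ((c n)%:R : R).
Proof. by apply: ln_ge0; rewrite ler1n. Qed.

Lemma log_rate_ge0 n : 0 <= log_rate n.
Proof. exact: divr_ge0 (ln_c_ge0 n) (ler0n _ _). Qed.

Lemma root_log_rate n : (c n)%:R `^ (n%:R)^-1 = expR (log_rate n).
Proof. by rewrite /powR pnatr_eq0 eqn0Ngt c_gt0 /= mulrC. Qed.

Lemma ln_ge_log_rate k n : (n - k)%:R * log_rate k <= ln (c n)%:R.
Proof.
have [->|k_gt0] := posnP k; first by rewrite log_rate0 mulr0 ln_c_ge0.
have le_n : (n - k <= n %/ k * k)%N.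
  have := ltn_pmod n k_gt0; have := divn_eq n k.
  by set q := (n %/ k)%N; set r := (n %% k)%N; lia.
have pow_le : (c k ^ (n %/ k) <= c n)%N.
  rewrite {2}(divn_eq n k); apply: leq_trans (supermul_expn _ _ _).
  by rewrite leq_pmulr.
apply: le_trans (_ : (n %/ k)%:R * ln (c k)%:R <= _); last first.
  rewrite mulr_natl -lnXn ?ltr0n // -natrX.
  by rewrite ler_ln ?posrE ?ltr0n ?expn_gt0 ?c_gt0 // ler_nat.
have -> : (n %/ k)%:R * ln (c k)%:R = (n %/ k * k)%:R * log_rate k :> R.
  by rewrite /log_rate natrM -mulrA [_%:R * (_ / _)]mulrC mulfVK // pnatr_eq0 -lt0n.
by apply: ler_wpM2r; rewrite ?log_rate_ge0 ?ler_nat.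
Qed.

Lemma log_rate_near k e : 0 < e -> \forall n \near \oo, log_rate k - e < log_rate n.
Proof.
move=> e_gt0.
(* [ln_ge_log_rate] gives [log_rate n >= log_rate k - k * log_rate k / n]. *)
exists (maxn k.+1 (Num.truncn (k%:R * log_rate k / e)).+1) => // n /=.
rewrite geq_max => /andP[kn Nn].
have n_gt0 : 0 < (n%:R : R) by rewrite ltr0n; exact: leq_ltn_trans kn.
rewrite /log_rate ltr_pdivlMr //.
have := ln_ge_log_rate k n; rewrite natrB ?(ltnW kn) // -/(log_rate k) => lnk.
have : k%:R * log_rate k / e < n%:R.
  by apply: lt_le_trans (truncnS_gt _) _; rewrite ler_nat.
rewrite ltr_pdivrMr //; have := log_rate_ge0 k; nra.
Qed.

Lemma log_rate_cvg_sup : (exists B, forall n, log_rate n <= B) ->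
  log_rate @ \oo --> sup (range log_rate).
Proof.
move=> [B leB]; have hs : has_sup (range log_rate).
  by split; [exists (log_rate 0), 0%N | exists B => _ [n _ <-]].
apply/cvgrPdist_lt => e e_gt0.
have e2_gt0 : 0 < e / 2 by rewrite divr_gt0.
have [_ [k _ <-] near_sup] := sup_adherent e2_gt0 hs.
apply: filterS (log_rate_near k e2_gt0) => n near_k.
have : log_rate n <= sup (range log_rate) by apply: sup_upper_bound => //; exists n.
rewrite -subr_ge0 => le_sup; rewrite ger0_norm //; lra.
Qed.

Lemma expR_log_rate_cvgy : ~ (exists B, forall n, log_rate n <= B) ->
  (expR \o log_rate) @ \oo --> +oo.
Proof.
move=> unbdd; apply/cvgryPge => M.
have [k ltk] : exists k, M + 1 < log_rate k.
  apply: contra_notP unbdd => none; exists (M + 1) => n.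
  by rewrite leNgt; apply/negP => lt; apply: none; exists n.
apply: filterS (log_rate_near k ltr01) => n /=.
by have := expR_ge1Dx (log_rate n); lra.
Qed.

End SupermultiplicativeGrowth.

Lemma supermul_root_cvg_or_liminfy (R : realType) (c : nat -> nat) :
  (forall m n, c m * c n <= c (m + n))%N ->
  (forall k n, k <= n -> 0 < c n -> 0 < c k)%N ->
  let a : nat -> R := fun n => (c n)%:R `^ (n%:R)^-1 in
  (exists l : R, a @ \oo --> l) \/ limn_einf (fun n => (a n)%:E) = +oo%E.
Proof.
move=> c_supermul c_gt0_le a.
have [[k ck0]|c_neq0] := pselect (exists k, c k = 0%N).
  left; exists 0; apply: cvg_near_cst; exists k.+1 => // n /= lt_kn.
  have cn0 : c n = 0%N.
    apply/eqP; rewrite -leqn0 leqNgt; apply: contraPN ck0.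
    by move=> /(c_gt0_le k n (ltnW lt_kn)) /lt0n_neq0/eqP.
  by rewrite /a cn0 powR0 // invr_eq0 pnatr_eq0 -lt0n; exact: leq_ltn_trans lt_kn.
have c_gt0 n : (0 < c n)%N by rewrite lt0n; apply/eqP => cn0; apply: c_neq0; exists n.
have aE : a = expR \o log_rate R c by apply/funext => n; rewrite /a root_log_rate.
rewrite aE; have [bdd|unbdd] := pselect (exists B, forall n, log_rate R c n <= B).
  left; exists (expR (sup (range (log_rate R c)))).
  apply: continuous_cvg (log_rate_cvg_sup c_supermul c_gt0 bdd).
  exact: continuous_expR.
right; apply: (cvg_limn_einf_sup _).1; apply/cvgeryP.
exact: expR_log_rate_cvgy c_supermul c_gt0 unbdd.
Qed.

Unset Implicit Arguments.

Theorem theorem30 (R : realType) (ord : nat -> nat)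
  (G : forall i : nat, ograph (ord i))
  (HG : forall i : nat, is_graph (G i))
  (Hirr : (forall i : nat, irreducible (G i)) \/
          (forall i : nat, irreducible (ocompl (G i)))) :
  let a : nat -> R := fun n => (#|Pn G n|%:R : R) `^ (n%:R)^-1 in
  (exists l : R, a @ \oo --> l) \/
  limn_einf (fun n => (a n)%:E) = +oo%E.
Proof.
move=> a.
have [b irrG] : exists b, forall i, irreducible (if b then ocompl (G i) else G i).
  by case: Hirr => ?; [exists false | exists true].
exact: supermul_root_cvg_or_liminfy (card_Pn_supermul irrG) (@card_Pn_gt0_le _ G).
Qed.
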